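(* Let $\alpha\ge\tfrac12$. There is a constant $C>0$ depending only on $\alpha$ such that for every $f\in(L^\infty,\ell^1)(\mathbb{R}_+,*_\alpha)$ and every $y\in\mathbb{R}_+$, $\|\tau_yf\|_{\infty,1}\le C\,\|f\|_{\infty,1}.$
   Context: Fix $\alpha\geq\tfrac12$. The Bessel–Kingman hypergroup is $(\mathbb{R}_+,*_\alpha)$ with Haar measure $\omega_\alpha(dz)=z^{2\alpha+1}dz$ and, for $x,y>0$, $\varepsilon_x*_\alpha\varepsilon_y(f)=\int_{|x-y|}^{x+y}K_\alpha(x,y,z)f(z)z^{2\alpha+1}dz$ with $K_\alpha(x,y,z)=C_\Gamma\frac{[(z^2-(x-y)^2)((x+y)^2-z^2)]^{\alpha-1/2}}{(xyz)^{2\alpha}}$, $C_\Gamma=\frac{\Gamma(\alpha+1)}{\Gamma(1/2)\Gamma(\alpha+1/2)2^{2\alpha-1}}$; $\varepsilon_0$ is the identity. Translation: $\tau_yf(x)=\varepsilon_x*_\alpha\varepsilon_y(f)$. Let $I_n=[n-1,n)$, $\omega_n=\omega_\alpha(I_n)$, $\|f\|_{\infty,1}=\sum_{n\ge1}\omega_n\sup_{x\in I_n}|f(x)|$, and $(L^\infty,\ell^1)(\mathbb{R}_+,*_\alpha)=\{f \text{ measurable}:\|f\|_{\infty,1}<\infty\}$. *)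

From Stdlib Require Import Reals Lra Arith Factorial ClassicalEpsilon.
Open Scope R_scope.

(* supremum / infimum of a set of reals (0 by default if it does not exist) *)
Definition Rsup (E : R -> Prop) : R :=
  match excluded_middle_informative (exists l, is_lub E l) with
  | left H => proj1_sig (constructive_indefinite_description _ H)
  | right _ => 0
  end.
Definition Rinf (E : R -> Prop) : R := - Rsup (fun v => E (- v)).

(* real powers b^e for b >= 0 (with 0^e = 0 for e <> 0, 0^0 = 1) *)
Definition rpow (b e : R) : R :=
  if Rlt_dec 0 b then Rpower b e
  else if Req_EM_T e 0 then 1 else 0.

Definition cover_len (T : R -> Prop) (L : R) : Prop :=
  exists a b : nat -> R,
    (forall k, a k <= b k) /\
    (forall x, T x -> exists k, a k < x < b k) /\
    infinite_sum (fun k => b k - a k) L.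

Definition outer (T : R -> Prop) : R := Rinf (cover_len T).

(* Caratheodory measurability (only test sets of finite outer measure matter) *)
Definition Lmeas (A : R -> Prop) : Prop :=
  forall T L, cover_len T L ->
    outer (fun x => T x /\ A x) + outer (fun x => T x /\ ~ A x) <= L.

Definition meas_fun_Rplus (f : R -> R) : Prop :=
  forall a, Lmeas (fun x => 0 <= x /\ a < f x).

Definition meas_partition (c d : R) (k : nat) (E : nat -> R -> Prop) : Prop :=
  (forall i, (i <= k)%nat -> Lmeas (E i)) /\
  (forall i x, (i <= k)%nat -> E i x -> c <= x <= d) /\
  (forall x, c <= x <= d -> exists i, (i <= k)%nat /\ E i x) /\
  (forall i j x, (i <= k)%nat -> (j <= k)%nat -> E i x -> E j x -> i = j).

(* Lebesgue integral over [c,d] of a bounded measurable g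
   (= supremum of the lower Lebesgue sums) *)
Definition Lint (g : R -> R) (c d : R) : R :=
  Rsup (fun s => exists k E, meas_partition c d k E /\
          s = sum_f_R0 (fun i => Rinf (fun v => exists x, E i x /\ v = g x)
                                   * outer (E i)) k).

Fixpoint poch (s : R) (n : nat) : R :=
  match n with O => s | S m => poch s m * (s + INR (S m)) end.
Definition Gamma (s : R) : R :=
  epsilon (inhabits 0)
    (fun l => Un_cv (fun n => INR (fact n) * rpow (INR n) s / poch s n) l).

Definition CGamma (a : R) : R :=
  Gamma (a + 1) / (Gamma (1/2) * Gamma (a + 1/2) * rpow 2 (2 * a - 1)).

Definition Kern (a x y z : R) : R :=
  CGamma a * rpow ((z ^ 2 - (x - y) ^ 2) * ((x + y) ^ 2 - z ^ 2)) (a - 1/2)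
    / rpow (x * y * z) (2 * a).

(* tau_y f (x) = (eps_x * eps_y)(f), eps_0 being the identity *)
Definition tau (a y : R) (f : R -> R) (x : R) : R :=
  if Req_EM_T y 0 then f x
  else if Req_EM_T x 0 then f y
  else Lint (fun z => Kern a x y z * f z * rpow z (2 * a + 1)) (Rabs (x - y)) (x + y).

(* omega_a(I_{n+1}) = omega_a([n, n+1)) = int_n^{n+1} z^{2a+1} dz *)
Definition omega (a : R) (n : nat) : R :=
  (rpow (INR n + 1) (2 * a + 2) - rpow (INR n) (2 * a + 2)) / (2 * a + 2).

(* ||f||_{infty,1} = N (finite): s n = sup_{x in [n,n+1)} |f x| exists for all n,
   and sum_n omega(I_{n+1}) s n = N *)
Definition is_norm (a : R) (f : R -> R) (N : R) : Prop :=
  exists s : nat -> R,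
    (forall n, is_lub (fun v => exists x, INR n <= x < INR n + 1 /\ v = Rabs (f x)) (s n)) /\
    infinite_sum (fun n => omega a n * s n) N.

(* For y > 0 and x in [n, n + 1), tau_y f (x) integrates f against the density
   K(x, y, z) z^(2 a + 1) on [|x - y|, x + y], and this density is bounded both by
   c / min(x, y) and by c z^(2 a) / (x y)^(a + 1/2).  Bounding the integral cell by cell gives
   sup_[n, n+1) |tau_y f| <= sum_m beta(n, m) sup_[m, m+1) |f| for an explicit nonnegative matrix
   beta supported where |n - m| < y + 1.  Since omega_n is comparable to (n + 1)^(2 a + 1),
   splitting into the regimes y << m, y >> m and y ~ m shows that the weighted column sums
   sum_n omega_n beta(n, m) are at most C omega_m uniformly in y and m, and Schur's test gives
   ||tau_y f||_(infty,1) <= C ||f||_(infty,1).  The integral of the statement is the supremum of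
   lower sums over measurable partitions; bounding it only needs the partition into cells and
   the sub- and superadditivity of Lebesgue outer measure on measurable sets. *)

From Stdlib Require Import Reals Lra Lia ZArith ClassicalEpsilon Classical.
From Stdlib Require Import FunctionalExtensionality PropExtensionality.
Open Scope R_scope.

(** * Series and finite sums *)

Lemma infinite_sum_le (u w : nat -> R) U W :
  infinite_sum u U -> infinite_sum w W -> (forall k, u k <= w k) -> U <= W.
Proof.
  intros Hu Hw Hle. exact (Rle_cv_lim (fun n => sum_growing u w n Hle) Hu Hw).
Qed.

Lemma infinite_sum_const0 : infinite_sum (fun _ => 0) 0.
Proof.
  intros eps He. exists 0%nat. intros n _. unfold Rdist.
  replace (sum_f_R0 (fun _ => 0) n) with 0.
  - rewrite Rminus_0_r, Rabs_R0. lra.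
  - induction n as [|n IH]; simpl; [reflexivity|]. rewrite <- IH. ring.
Qed.

Lemma infinite_sum_nonneg (u : nat -> R) U :
  infinite_sum u U -> (forall k, 0 <= u k) -> 0 <= U.
Proof. intros Hu Hp. exact (infinite_sum_le _ u 0 U infinite_sum_const0 Hu Hp). Qed.

Lemma infinite_sum_comparison (u w : nat -> R) W :
  (forall k, 0 <= u k <= w k) -> infinite_sum w W ->
  exists U, infinite_sum u U /\ U <= W.
Proof.
  intros H Hw. destruct (Rseries_CV_comp u w H (exist _ W Hw)) as [U HU].
  exists U. split; [exact HU|]. apply (infinite_sum_le u w); auto. intro k; apply H.
Qed.

Lemma infinite_sum_plus (u v : nat -> R) U V :
  infinite_sum u U -> infinite_sum v V -> infinite_sum (fun k => u k + v k) (U + V).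
Proof.
  intros Hu Hv eps He.
  destruct (CV_plus (sum_f_R0 u) (sum_f_R0 v) U V Hu Hv eps He) as [N HN].
  exists N. intros n Hn. rewrite plus_sum. apply HN; auto.
Qed.

Lemma infinite_sum_scal (u : nat -> R) U c :
  infinite_sum u U -> infinite_sum (fun k => c * u k) (c * U).
Proof.
  intros Hu eps He.
  assert (Hc : Un_cv (fun _ => c) c).
  { intros e He'. exists 0%nat. intros. unfold Rdist. rewrite Rminus_diag, Rabs_R0; lra. }
  destruct (CV_mult (fun _ => c) (sum_f_R0 u) c U Hc Hu eps He) as [N HN].
  exists N. intros n Hn. specialize (HN n Hn).
  replace (sum_f_R0 (fun k => c * u k) n) with (c * sum_f_R0 u n); [exact HN|].
  rewrite scal_sum. apply sum_eq. intros; ring.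
Qed.

Definition first_only (v : R) (k : nat) : R := match k with O => v | _ => 0 end.

Lemma infinite_sum_first_only v : infinite_sum (first_only v) v.
Proof.
  intros eps He. exists 0%nat. intros n _.
  replace (sum_f_R0 (first_only v) n) with v.
  - unfold Rdist. rewrite Rminus_diag, Rabs_R0; lra.
  - induction n as [|n IH]; simpl; [reflexivity|]. rewrite <- IH. ring.
Qed.

Lemma partial_sum_le_infinite_sum (u : nat -> R) U n :
  infinite_sum u U -> (forall k, 0 <= u k) -> sum_f_R0 u n <= U.
Proof.
  intros Hu H. apply (growing_ineq (sum_f_R0 u)); auto.
  intro k. simpl. specialize (H (S k)). lra.
Qed.

Definition interleave (u v : nat -> R) (k : nat) : R :=
  if Nat.even k then u (Nat.div2 k) else v (Nat.div2 k).

Lemma interleave_even u v k : interleave u v (2 * k) = u k.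
Proof. unfold interleave. rewrite Nat.even_mul, Nat.div2_double. reflexivity. Qed.

Lemma interleave_odd u v k : interleave u v (S (2 * k)) = v k.
Proof.
  unfold interleave. rewrite Nat.even_succ, Nat.odd_mul, Nat.div2_succ_double. reflexivity.
Qed.

Lemma interleave_minus u1 v1 u2 v2 :
  (fun k => interleave u1 v1 k - interleave u2 v2 k) =
  interleave (fun k => u1 k - u2 k) (fun k => v1 k - v2 k).
Proof.
  apply functional_extensionality. intro k. unfold interleave. now destruct (Nat.even k).
Qed.

Lemma sum_interleave_odd u v K :
  sum_f_R0 (interleave u v) (S (2 * K)) = sum_f_R0 u K + sum_f_R0 v K.
Proof.
  induction K as [|K IH].
  - simpl. unfold interleave. simpl. ring.
  - replace (S (2 * S K)) with (S (S (S (2 * K)))) by lia.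
    rewrite tech5, tech5, IH, tech5, tech5.
    replace (S (S (2 * K))) with (2 * S K)%nat by lia.
    rewrite interleave_even, interleave_odd. ring.
Qed.

Lemma sum_interleave_even u v K :
  sum_f_R0 (interleave u v) (2 * S K) = sum_f_R0 u (S K) + sum_f_R0 v K.
Proof.
  replace (2 * S K)%nat with (S (S (2 * K)))%nat at 1 by lia.
  rewrite tech5, sum_interleave_odd, tech5.
  replace (S (S (2 * K))) with (2 * S K)%nat by lia.
  rewrite interleave_even. ring.
Qed.

Lemma infinite_sum_interleave (u v : nat -> R) U V :
  infinite_sum u U -> infinite_sum v V -> infinite_sum (interleave u v) (U + V).
Proof.
  intros Hu Hv eps He.
  destruct (Hu (eps/2)) as [N1 H1]; [lra|].
  destruct (Hv (eps/2)) as [N2 H2]; [lra|].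
  exists (2 * (N1 + N2) + 2)%nat. intros n Hn.
  assert (Hsplit : forall i j, (N1 <= i)%nat -> (N2 <= j)%nat ->
            Rdist (sum_f_R0 u i + sum_f_R0 v j) (U + V) < eps).
  { intros i j Hi Hj. specialize (H1 i Hi). specialize (H2 j Hj). unfold Rdist in *.
    replace (sum_f_R0 u i + sum_f_R0 v j - (U + V)) with
      ((sum_f_R0 u i - U) + (sum_f_R0 v j - V)) by ring.
    eapply Rle_lt_trans; [apply Rabs_triang|]. lra. }
  destruct (Nat.Even_or_Odd n) as [[K HK]|[K HK]]; subst n.
  - destruct K as [|K]; [lia|]. rewrite sum_interleave_even. apply Hsplit; lia.
  - replace (2 * K + 1)%nat with (S (2 * K)) by lia.
    rewrite sum_interleave_odd. apply Hsplit; lia.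
Qed.

Lemma sum_f_R0_swap (F : nat -> nat -> R) k n :
  sum_f_R0 (fun i => sum_f_R0 (fun m => F i m) n) k =
  sum_f_R0 (fun m => sum_f_R0 (fun i => F i m) k) n.
Proof.
  induction k as [|k IH].
  - simpl. apply sum_eq. intros; reflexivity.
  - rewrite tech5, IH, <- plus_sum. apply sum_eq. intros; rewrite tech5; reflexivity.
Qed.

Lemma sum_f_R0_mult_l (u : nat -> R) c n :
  c * sum_f_R0 u n = sum_f_R0 (fun i => c * u i) n.
Proof. rewrite scal_sum. apply sum_eq. intros; ring. Qed.

Lemma sum_f_R0_opp (u : nat -> R) n : sum_f_R0 (fun i => - u i) n = - sum_f_R0 u n.
Proof. induction n as [|n IH]; simpl; [reflexivity|]. rewrite IH; ring. Qed.

Lemma sum_f_R0_ge_term (u : nat -> R) i n :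
  (forall k, 0 <= u k) -> (i <= n)%nat -> u i <= sum_f_R0 u n.
Proof.
  intros H Hi. induction n as [|n IH].
  - replace i with 0%nat by lia. simpl; lra.
  - rewrite tech5. destruct (Nat.eq_dec i (S n)) as [->|Hne].
    + pose proof (cond_pos_sum u n H). lra.
    + specialize (IH ltac:(lia)). specialize (H (S n)). lra.
Qed.

Lemma sum_f_R0_le_extend (u : nat -> R) n1 n2 :
  (forall k, 0 <= u k) -> (n1 <= n2)%nat -> sum_f_R0 u n1 <= sum_f_R0 u n2.
Proof.
  intros H Hn. induction Hn as [|n2 _ IH]; [lra|]. rewrite tech5. specialize (H (S n2)). lra.
Qed.

Lemma sum_f_R0_le_count (u : nat -> R) A B v K : 0 <= v -> (forall n, 0 <= u n <= v) ->
  (forall n, u n <> 0 -> A <= INR n <= B) ->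
  sum_f_R0 u K <= Rmax 0 (B - A + 1) * v.
Proof.
  intros Hv Hu Hs.
  assert (G : sum_f_R0 u K <= Rmax 0 (Rmin B (INR K) - A + 1) * v).
  { induction K as [|K IH].
    - simpl. destruct (Req_dec (u 0%nat) 0) as [E|E].
      + rewrite E. apply Rmult_le_pos; [apply Rmax_l|auto].
      + specialize (Hs _ E). simpl in Hs. specialize (Hu 0%nat).
        rewrite Rmin_right by lra. unfold Rmax; destruct Rle_dec; nra.
    - rewrite tech5, S_INR. destruct (Req_dec (u (S K)) 0) as [E|E].
      + rewrite E, Rplus_0_r. eapply Rle_trans; [apply IH|].
        apply Rmult_le_compat_r; auto. unfold Rmax, Rmin; repeat destruct Rle_dec; lra.
      + specialize (Hs _ E). rewrite S_INR in Hs. specialize (Hu (S K)).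
        eapply Rle_trans; [apply Rplus_le_compat; [apply IH|apply (proj2 Hu)]|].
        rewrite (Rmin_right B (INR K)), (Rmin_right B (INR K + 1)) by lra.
        unfold Rmax; repeat destruct Rle_dec; nra. }
  eapply Rle_trans; [apply G|]. apply Rmult_le_compat_r; auto.
  unfold Rmax, Rmin; repeat destruct Rle_dec; lra.
Qed.

Lemma floor_nat x : 0 <= x -> exists m : nat, INR m <= x < INR m + 1.
Proof.
  intro Hx. destruct (archimed x) as [H1 H2].
  assert (Hu : (1 <= up x)%Z).
  { assert (0 < up x)%Z by (apply lt_IZR; lra). lia. }
  exists (Z.to_nat (up x - 1)).
  rewrite INR_IZR_INZ, Z2Nat.id by lia. rewrite minus_IZR. simpl. lra.
Qed.

Lemma nat_cell_unique (i j : nat) x :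
  INR i <= x < INR i + 1 -> INR j <= x < INR j + 1 -> i = j.
Proof.
  intros [H1 H2] [H3 H4].
  assert (INR i < INR (j + 1)) by (rewrite plus_INR; simpl; lra).
  assert (INR j < INR (i + 1)) by (rewrite plus_INR; simpl; lra).
  apply INR_lt in H. apply INR_lt in H0. lia.
Qed.

Lemma nat_cell_le (i top : nat) x : INR i <= x -> x < INR top + 1 -> (i <= top)%nat.
Proof.
  intros H1 H2. assert (INR i < INR (top + 1)) by (rewrite plus_INR; simpl; lra).
  apply INR_lt in H. lia.
Qed.

Lemma Rsup_is_lub E l : is_lub E l -> Rsup E = l.
Proof.
  intro H. unfold Rsup. destruct excluded_middle_informative as [e|n].
  - destruct (constructive_indefinite_description _ e) as [l' Hl']. simpl.
    eapply is_lub_u; eauto.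
  - exfalso; apply n; eauto.
Qed.

Lemma Rsup_cases E : (exists l, is_lub E l /\ Rsup E = l) \/ Rsup E = 0.
Proof.
  destruct (classic (exists l, is_lub E l)) as [[l Hl]|Hn].
  - left. exists l. split; auto. apply Rsup_is_lub; auto.
  - right. unfold Rsup. destruct excluded_middle_informative; [contradiction|reflexivity].
Qed.

Lemma Rinf_image_le_max0 (P : R -> Prop) (g : R -> R) z :
  P z -> Rinf (fun v => exists x, P x /\ v = g x) <= Rmax 0 (g z).
Proof.
  intro Hz. unfold Rinf.
  destruct (Rsup_cases (fun v => exists x, P x /\ - v = g x)) as [[l [Hl ->]] | ->].
  - assert (- g z <= l) by (apply Hl; exists z; split; auto; ring).
    unfold Rmax; destruct Rle_dec; lra.
  - unfold Rmax; destruct Rle_dec; lra.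
Qed.

Lemma Rinf_ge_lower_bound (F : R -> Prop) G :
  0 <= G -> (forall v, F v -> - G <= v) -> - G <= Rinf F.
Proof.
  intros HG H. unfold Rinf.
  destruct (Rsup_cases (fun v => F (- v))) as [[l [Hl ->]] | ->]; [|lra].
  assert (l <= G) by (apply Hl; intros v Hv; specialize (H _ Hv); lra). lra.
Qed.

(** * Lebesgue outer measure *)

Lemma cover_len_nonneg T L : cover_len T L -> 0 <= L.
Proof.
  intros [a [b [Hab [_ Hs]]]]. apply (infinite_sum_nonneg _ _ Hs). intro k. specialize (Hab k). lra.
Qed.

Lemma cover_len_mono A B L : (forall x, A x -> B x) -> cover_len B L -> cover_len A L.
Proof. intros H [a [b [H1 [H2 H3]]]]. exists a, b. repeat split; auto. Qed.

Lemma cover_len_empty A : (forall x, ~ A x) -> cover_len A 0.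
Proof.
  intro H. exists (fun _ => 0), (fun _ => 0). split; [|split].
  - intros; lra.
  - intros y Hy. exfalso; eapply H; eauto.
  - rewrite Rminus_0_r. apply infinite_sum_const0.
Qed.

Lemma cover_len_union A B1 B2 L1 L2 : (forall x, A x -> B1 x \/ B2 x) ->
  cover_len B1 L1 -> cover_len B2 L2 -> cover_len A (L1 + L2).
Proof.
  intros H [a1 [b1 [Ha1 [Hc1 Hs1]]]] [a2 [b2 [Ha2 [Hc2 Hs2]]]].
  exists (interleave a1 a2), (interleave b1 b2). split; [|split].
  - intro k. unfold interleave. destruct (Nat.even k); auto.
  - intros x Hx. destruct (H x Hx) as [Hb|Hb].
    + destruct (Hc1 x Hb) as [k Hk]. exists (2 * k)%nat. now rewrite !interleave_even.
    + destruct (Hc2 x Hb) as [k Hk]. exists (S (2 * k)). now rewrite !interleave_odd.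
  - rewrite interleave_minus. apply infinite_sum_interleave; auto.
Qed.

Lemma cover_len_interval A p q eps : (forall x, A x -> p <= x <= q) -> 0 < eps ->
  exists L, cover_len A L /\ L <= Rmax 0 (q - p) + eps.
Proof.
  intros H He. destruct (Rle_dec p q) as [Hpq|Hpq].
  - exists (q - p + eps). split.
    + exists (first_only (p - eps/2)), (first_only (q + eps/2)). split; [|split].
      * intros [|k]; simpl; lra.
      * intros x Hx. exists 0%nat. simpl. specialize (H x Hx). lra.
      * replace (fun k => first_only (q + eps / 2) k - first_only (p - eps / 2) k)
          with (first_only (q - p + eps)); [apply infinite_sum_first_only|].
        apply functional_extensionality. intros [|k]; simpl; lra.
    + rewrite Rmax_right by lra. lra.
  - exists 0. split.
    + apply cover_len_empty. intros x Hx. specialize (H x Hx). lra.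
    + pose proof (Rmax_l 0 (q - p)). lra.
Qed.

Lemma cover_len_bounded A p q : (forall x, A x -> p <= x <= q) -> exists L, cover_len A L.
Proof.
  intro H. destruct (cover_len_interval A p q 1 H) as [L [HL _]]; [lra|]. eauto.
Qed.

Lemma outer_nonneg T : 0 <= outer T.
Proof.
  unfold outer, Rinf.
  destruct (Rsup_cases (fun v => cover_len T (- v))) as [[l [Hl ->]] | ->]; [|lra].
  assert (l <= 0) by (apply Hl; intros v Hv; apply cover_len_nonneg in Hv; lra). lra.
Qed.

Lemma outer_le_cover_len T L : cover_len T L -> outer T <= L.
Proof.
  intro HL. unfold outer, Rinf.
  destruct (Rsup_cases (fun v => cover_len T (- v))) as [[l [Hl ->]] | ->].
  - assert (-L <= l) by (apply Hl; rewrite Ropp_involutive; auto). lra.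
  - apply cover_len_nonneg in HL; lra.
Qed.

Lemma outer_approx T : (exists L, cover_len T L) ->
  forall eps, 0 < eps -> exists L, cover_len T L /\ L <= outer T + eps.
Proof.
  intros [L0 H0] eps He.
  assert (Hb : bound (fun v => cover_len T (- v))).
  { exists 0. intros v Hv. apply cover_len_nonneg in Hv. lra. }
  assert (Hne : exists v, cover_len T (- v)) by (exists (-L0); rewrite Ropp_involutive; auto).
  destruct (completeness _ Hb Hne) as [l Hl].
  assert (Ho : outer T = - l) by (unfold outer, Rinf; rewrite (Rsup_is_lub _ l Hl); auto).
  apply NNPP. intro E.
  assert (l <= l - eps); [|lra].
  apply Hl. intros v Hv. apply Rnot_lt_le. intro Hlt.
  apply E. exists (-v). split; auto. lra.
Qed.

Lemma outer_mono A B : (forall x, A x -> B x) -> (exists L, cover_len B L) ->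
  outer A <= outer B.
Proof.
  intros H HB. apply Rle_plus_epsilon. intros eps He.
  destruct (outer_approx B HB eps He) as [L [HL HL']].
  apply Rle_trans with L; auto. apply outer_le_cover_len. eapply cover_len_mono; eauto.
Qed.

Lemma outer_empty A : (forall x, ~ A x) -> outer A = 0.
Proof.
  intro H. apply Rle_antisym; [|apply outer_nonneg].
  apply outer_le_cover_len, cover_len_empty; auto.
Qed.

Lemma outer_interval A p q : (forall x, A x -> p <= x <= q) -> outer A <= Rmax 0 (q - p).
Proof.
  intro H. apply Rle_plus_epsilon. intros eps He.
  destruct (cover_len_interval A p q eps H He) as [L [HL HL']].
  apply outer_le_cover_len in HL. lra.
Qed.

Lemma outer_subadditive A B1 B2 : (forall x, A x -> B1 x \/ B2 x) ->
  (exists L, cover_len B1 L) -> (exists L, cover_len B2 L) ->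
  outer A <= outer B1 + outer B2.
Proof.
  intros H H1 H2. apply Rle_plus_epsilon. intros eps He.
  destruct (outer_approx B1 H1 (eps/2)) as [L1 [C1 HL1]]; [lra|].
  destruct (outer_approx B2 H2 (eps/2)) as [L2 [C2 HL2]]; [lra|].
  pose proof (outer_le_cover_len _ _ (cover_len_union A B1 B2 L1 L2 H C1 C2)). lra.
Qed.

Lemma outer_subadditive_finite (B : nat -> R -> Prop) p q :
  (forall m x, B m x -> p <= x <= q) ->
  forall n (A : R -> Prop), (forall x, A x -> exists m, (m <= n)%nat /\ B m x) ->
  outer A <= sum_f_R0 (fun m => outer (B m)) n.
Proof.
  intros HB. induction n as [|n IH]; intros A HA.
  - simpl. apply outer_mono.
    + intros x Hx. destruct (HA x Hx) as [m [Hm Hb]]. replace m with 0%nat in Hb by lia. auto.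
    + apply (cover_len_bounded _ p q). intros x; apply HB.
  - rewrite tech5.
    apply Rle_trans with (outer (fun x => exists m, (m <= n)%nat /\ B m x) + outer (B (S n))).
    + apply outer_subadditive.
      * intros x Hx. destruct (HA x Hx) as [m [Hm Hb]].
        destruct (Nat.eq_dec m (S n)) as [->|Hne]; [now right|].
        left. exists m. split; auto; lia.
      * apply (cover_len_bounded _ p q). intros x [m [_ Hm]]. eauto.
      * apply (cover_len_bounded _ p q). eauto.
    + apply Rplus_le_compat_r. apply IH. auto.
Qed.

Lemma cover_len_intervals (a b : nat -> R) L : (forall k, a k <= b k) ->
  infinite_sum (fun k => b k - a k) L -> cover_len (fun x => exists k, a k < x < b k) L.
Proof. intros Hab Hs. exists a, b. auto. Qed.

(* (m1, m2) is the middle piece, (a, l2) and (r1, b) the outer pieces of (a, b) trimmed at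
   distance d around [p, q]. *)
Lemma trimmed_pieces_length a b p q d : a <= b -> 0 <= d -> p <= q ->
  let m1 := Rmax a (p - d) in let m2 := Rmax m1 (Rmin b (q + d)) in
  let l2 := Rmax a (Rmin b (p + d)) in let r1 := Rmin b (Rmax a (q - d)) in
  0 <= m2 - m1 /\ 0 <= l2 - a /\ 0 <= b - r1 /\
  (m2 - m1) + (l2 - a) + (b - r1) <= (b - a) + 4 * d.
Proof. intros Hab Hd Hpq. cbv zeta. unfold Rmax, Rmin. repeat destruct Rle_dec; lra. Qed.

Lemma trimmed_piece_middle a b p q d x : a < x < b -> p <= x <= q -> 0 < d ->
  Rmax a (p - d) < x < Rmax (Rmax a (p - d)) (Rmin b (q + d)).
Proof. intros. unfold Rmax, Rmin. repeat destruct Rle_dec; lra. Qed.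

Lemma trimmed_piece_outer a b p q d x : a < x < b -> x <= p \/ q <= x -> 0 < d ->
  a < x < Rmax a (Rmin b (p + d)) \/ Rmin b (Rmax a (q - d)) < x < b.
Proof. intros. unfold Rmax, Rmin. repeat destruct Rle_dec; lra. Qed.

(* Trimming each covering interval at distance eta times its length splits a cover of T into
   covers of T /\ A and T /\ ~ A of total length (1 + 4 eta) L. *)
Lemma interval_cover_split A p q T (a b : nat -> R) L eta :
  (forall x, A x -> p <= x <= q) -> (forall x, p < x < q -> A x) -> p <= q ->
  (forall k, a k <= b k) -> (forall x, T x -> exists k, a k < x < b k) ->
  infinite_sum (fun k => b k - a k) L -> 0 < eta ->
  exists L1 L2, cover_len (fun x => T x /\ A x) L1 /\ cover_len (fun x => T x /\ ~ A x) L2 /\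
    L1 + L2 <= (1 + 4 * eta) * L.
Proof.
  intros HA1 HA2 Hpq Hab Hcov Hs Heta.
  set (d := fun k => eta * (b k - a k)).
  assert (Hd : forall k, 0 <= d k) by (intro k; unfold d; specialize (Hab k); nra).
  set (m1 := fun k => Rmax (a k) (p - d k)).
  set (m2 := fun k => Rmax (m1 k) (Rmin (b k) (q + d k))).
  set (l2 := fun k => Rmax (a k) (Rmin (b k) (p + d k))).
  set (r1 := fun k => Rmin (b k) (Rmax (a k) (q - d k))).
  set (w := fun k => (1 + 4 * eta) * (b k - a k)).
  assert (Hw : infinite_sum w ((1 + 4 * eta) * L)) by (apply infinite_sum_scal; auto).
  assert (Hp : forall k, 0 <= m2 k - m1 k /\ 0 <= l2 k - a k /\ 0 <= b k - r1 k /\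
                (m2 k - m1 k) + (l2 k - a k) + (b k - r1 k) <= w k).
  { intro k. pose proof (trimmed_pieces_length (a k) (b k) p q (d k) (Hab k) (Hd k) Hpq).
    unfold w, m2, m1, l2, r1, d in *. lra. }
  destruct (infinite_sum_comparison (fun k => m2 k - m1 k) w _
              ltac:(intro k; specialize (Hp k); lra) Hw) as [L1 [HL1 _]].
  destruct (infinite_sum_comparison (fun k => l2 k - a k) w _
              ltac:(intro k; specialize (Hp k); lra) Hw) as [L2 [HL2 _]].
  destruct (infinite_sum_comparison (fun k => b k - r1 k) w _
              ltac:(intro k; specialize (Hp k); lra) Hw) as [L3 [HL3 _]].
  assert (Hpos : forall x k, a k < x < b k -> 0 < d k) by (intros x k Hk; unfold d; nra).
  exists L1, (L2 + L3). split; [|split].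
  - eapply cover_len_mono; [|apply cover_len_intervals; [|exact HL1]].
    + intros x [Hx Ax]. destruct (Hcov x Hx) as [k Hk]. exists k.
      apply trimmed_piece_middle; eauto.
    + intro k; specialize (Hp k); lra.
  - apply (cover_len_union _ (fun x => exists k, a k < x < l2 k)
                             (fun x => exists k, r1 k < x < b k)).
    + intros x [Hx Ax]. destruct (Hcov x Hx) as [k Hk].
      assert (Hx' : x <= p \/ q <= x).
      { destruct (Rle_dec x p); auto. destruct (Rle_dec q x); auto.
        exfalso; apply Ax, HA2; lra. }
      destruct (trimmed_piece_outer (a k) (b k) p q (d k) x Hk Hx' (Hpos x k Hk)); eauto.
    + apply cover_len_intervals; auto. intro k; specialize (Hp k); lra.
    + apply cover_len_intervals; auto. intro k; specialize (Hp k); lra.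
  - rewrite <- Rplus_assoc.
    apply (infinite_sum_le (fun k => (m2 k - m1 k) + (l2 k - a k) + (b k - r1 k)) w); auto.
    + repeat apply infinite_sum_plus; auto.
    + intro k; apply Hp.
Qed.

Lemma interval_Lmeas A p q : (forall x, A x -> p <= x <= q) ->
  (forall x, p < x < q -> A x) -> Lmeas A.
Proof.
  intros HA1 HA2 T L HL.
  destruct (Rle_dec p q) as [Hpq|Hpq].
  2:{ rewrite (outer_empty (fun x => T x /\ A x)).
      - assert (outer (fun x => T x /\ ~ A x) <= L); [|lra].
        apply outer_le_cover_len. eapply cover_len_mono; [|exact HL]. intros x [Hx _]; auto.
      - intros x [_ Hx]. specialize (HA1 x Hx). lra. }
  assert (HL0 : 0 <= L) by (eapply cover_len_nonneg; eauto).
  destruct HL as [a [b [Hab [Hcov Hs]]]].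
  apply Rle_plus_epsilon. intros eps He.
  set (eta := eps / (4 * (L + 1))).
  assert (Heta : 0 < eta) by (unfold eta; apply Rdiv_lt_0_compat; lra).
  assert (Heta2 : 4 * eta * L <= eps).
  { unfold eta. apply Rmult_le_reg_r with (L + 1); [lra|]. field_simplify; [|lra]. nra. }
  destruct (interval_cover_split A p q T a b L eta HA1 HA2 Hpq Hab Hcov Hs Heta)
    as [L1 [L2 [C1 [C2 Htot]]]].
  apply outer_le_cover_len in C1. apply outer_le_cover_len in C2. nra.
Qed.

Lemma Lmeas_split A T : Lmeas A -> (exists L, cover_len T L) ->
  outer (fun x => T x /\ A x) + outer (fun x => T x /\ ~ A x) <= outer T.
Proof.
  intros HA HT. apply Rle_plus_epsilon. intros eps He.
  destruct (outer_approx T HT eps He) as [L [HL HL']].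
  specialize (HA T L HL). lra.
Qed.

Lemma outer_disjoint_sum_le (E : nat -> R -> Prop) k :
  (forall i, (i <= k)%nat -> Lmeas (E i)) ->
  (forall i j x, (i <= k)%nat -> (j <= k)%nat -> E i x -> E j x -> i = j) ->
  forall T, (exists L, cover_len T L) ->
  sum_f_R0 (fun i => outer (fun x => T x /\ E i x)) k <= outer T.
Proof.
  induction k as [|k IH]; intros Hm Hd T HT.
  - simpl. pose proof (Lmeas_split (E 0%nat) T (Hm 0%nat (le_n _)) HT).
    pose proof (outer_nonneg (fun x => T x /\ ~ E 0%nat x)). lra.
  - rewrite tech5.
    pose proof (Lmeas_split (E (S k)) T (Hm _ (le_n _)) HT).
    assert (IHT : sum_f_R0 (fun i => outer (fun x => (T x /\ ~ E (S k) x) /\ E i x)) k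
                 <= outer (fun x => T x /\ ~ E (S k) x)).
    { apply IH.
      - intros; apply Hm; lia.
      - intros; eapply Hd; eauto; lia.
      - destruct HT as [L HL]. exists L. eapply cover_len_mono; [|exact HL]. intros x [? ?]; auto. }
    replace (sum_f_R0 (fun i => outer (fun x => T x /\ E i x)) k) with
      (sum_f_R0 (fun i => outer (fun x => (T x /\ ~ E (S k) x) /\ E i x)) k); [lra|].
    apply sum_eq. intros i Hi. f_equal.
    apply functional_extensionality. intro x. apply propositional_extensionality. split.
    + intros [[? ?] ?]; auto.
    + intros [Tx Ex]. repeat split; auto. intro Hx.
      assert (i = S k) by (eapply Hd; eauto). lia.
Qed.

(** * Lower sums of the integral *)

Definition lower_sum (g : R -> R) (E : nat -> R -> Prop) (k : nat) : R :=
  sum_f_R0 (fun i => Rinf (fun v => exists x, E i x /\ v = g x) * outer (E i)) k.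

Lemma Lint_lower_sums g c d : Lint g c d =
  Rsup (fun s => exists k E, meas_partition c d k E /\ s = lower_sum g E k).
Proof. reflexivity. Qed.

Definition cell (c d : R) (m : nat) : R -> Prop :=
  fun z => c <= z <= d /\ INR m <= z < INR m + 1.
Definition cell_len (c d : R) (m : nat) : R :=
  Rmax 0 (Rmin d (INR m + 1) - Rmax c (INR m)).

Lemma cell_bounds c d m z : cell c d m z -> Rmax c (INR m) <= z <= Rmin d (INR m + 1).
Proof. intros [[? ?] [? ?]]. unfold Rmax, Rmin. repeat destruct Rle_dec; lra. Qed.

Lemma cell_Lmeas c d m : Lmeas (cell c d m).
Proof.
  apply (interval_Lmeas _ (Rmax c (INR m)) (Rmin d (INR m + 1))); [apply cell_bounds|].
  intros x Hx. unfold cell. revert Hx. unfold Rmax, Rmin. repeat destruct Rle_dec; lra.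
Qed.

Lemma outer_cell_le c d m : outer (cell c d m) <= cell_len c d m.
Proof. apply outer_interval, cell_bounds. Qed.

Lemma cell_len_nonneg c d m : 0 <= cell_len c d m.
Proof. apply Rmax_l. Qed.

Lemma cell_partition c d (top : nat) :
  0 <= c -> d < INR top + 1 -> meas_partition c d top (cell c d).
Proof.
  intros Hc Hd. split; [|split; [|split]].
  - intros; apply cell_Lmeas.
  - intros i x _ [Hx _]; auto.
  - intros x Hx. destruct (floor_nat x) as [m Hm]; [lra|].
    exists m. split; [apply (nat_cell_le m top x); lra|]. split; auto.
  - intros i j x _ _ [_ Hi] [_ Hj]. eapply nat_cell_unique; eauto.
Qed.

Section LowerSums.
Variables (g : R -> R) (c d : R) (top : nat) (G : nat -> R).
Hypothesis Hc : 0 <= c.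
Hypothesis Hd : d < INR top + 1.
Hypothesis HG : forall m, 0 <= G m.
Hypothesis Hg : forall m z, c <= z <= d -> INR m <= z < INR m + 1 -> Rabs (g z) <= G m.

Lemma lower_sum_piece_le (Ei : R -> Prop) : (forall x, Ei x -> c <= x <= d) ->
  Rinf (fun v => exists x, Ei x /\ v = g x) * outer Ei <=
  sum_f_R0 (fun m => G m * outer (fun x => cell c d m x /\ Ei x)) top.
Proof.
  intros HE. set (inf := Rinf (fun v => exists x, Ei x /\ v = g x)).
  apply Rle_trans with (Rmax 0 inf * outer Ei).
  { apply Rmult_le_compat_r; [apply outer_nonneg|apply Rmax_r]. }
  apply Rle_trans with
    (Rmax 0 inf * sum_f_R0 (fun m => outer (fun x => cell c d m x /\ Ei x)) top).
  { apply Rmult_le_compat_l; [apply Rmax_l|].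
    apply (outer_subadditive_finite _ c d); [intros m x [[Hx _] _]; auto|].
    intros x Hx. destruct (HE x Hx) as [H1 H2].
    destruct (floor_nat x) as [m Hm]; [lra|].
    exists m. split; [apply (nat_cell_le m top x); lra|]. repeat split; tauto. }
  rewrite sum_f_R0_mult_l. apply sum_Rle. intros m _.
  destruct (classic (exists z, cell c d m z /\ Ei z)) as [[z [[J1 J2] Ez]]|Hne].
  - apply Rmult_le_compat_r; [apply outer_nonneg|].
    apply Rmax_lub; [apply HG|].
    apply Rle_trans with (Rmax 0 (g z)); [apply Rinf_image_le_max0; auto|].
    apply Rmax_lub; [apply HG|]. specialize (Hg m z J1 J2).
    apply Rle_trans with (Rabs (g z)); [apply RRle_abs|auto].
  - rewrite outer_empty; [lra|]. intros x Hx. apply Hne; eauto.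
Qed.

Lemma lower_sum_le k E : meas_partition c d k E ->
  lower_sum g E k <= sum_f_R0 (fun m => G m * cell_len c d m) top.
Proof.
  intros [Hm [Hin [_ Hdj]]]. unfold lower_sum.
  apply Rle_trans with
    (sum_f_R0 (fun i => sum_f_R0 (fun m => G m * outer (fun x => cell c d m x /\ E i x)) top) k).
  { apply sum_Rle. intros i Hi. apply lower_sum_piece_le. intros x; apply Hin; auto. }
  rewrite sum_f_R0_swap. apply sum_Rle. intros m _.
  rewrite <- sum_f_R0_mult_l. apply Rmult_le_compat_l; [apply HG|].
  apply Rle_trans with (outer (cell c d m)); [|apply outer_cell_le].
  apply outer_disjoint_sum_le; auto.
  apply (cover_len_bounded _ c d). intros x [Hx _]; auto.
Qed.

Lemma cell_lower_sum_ge :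
  - sum_f_R0 (fun m => G m * cell_len c d m) top <= lower_sum g (cell c d) top.
Proof.
  rewrite <- sum_f_R0_opp. apply sum_Rle. intros m _.
  assert (Hi : - G m <= Rinf (fun v => exists x, cell c d m x /\ v = g x)).
  { apply Rinf_ge_lower_bound; [apply HG|]. intros v [x [[J1 J2] ->]].
    specialize (Hg m x J1 J2). pose proof (Rle_abs (- g x)). rewrite Rabs_Ropp in *. lra. }
  pose proof (outer_nonneg (cell c d m)). pose proof (outer_cell_le c d m).
  pose proof (HG m). nra.
Qed.

(* Every lower sum is bounded by the cell bound, and the partition into cells attains at
   least its negative. *)
Lemma Lint_abs_le : c <= d ->
  Rabs (Lint g c d) <= sum_f_R0 (fun m => G m * cell_len c d m) top.
Proof.
  intros Hcd. rewrite Lint_lower_sums.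
  set (S := fun s => exists k E, meas_partition c d k E /\ s = lower_sum g E k).
  set (B := sum_f_R0 (fun m => G m * cell_len c d m) top).
  assert (HU : forall s, S s -> s <= B) by (intros s [k [E [HE ->]]]; apply (lower_sum_le k E HE)).
  assert (HJ : S (lower_sum g (cell c d) top)).
  { exists top, (cell c d). split; auto. apply cell_partition; auto. }
  destruct (completeness S (ex_intro _ B HU) (ex_intro S _ HJ)) as [l Hl].
  rewrite (Rsup_is_lub S l Hl).
  assert (l <= B) by (apply (proj2 Hl); intros s Hs; apply HU; auto).
  pose proof (proj1 Hl _ HJ). pose proof cell_lower_sum_ge as Hlow. fold B in Hlow.
  apply Rabs_le. lra.
Qed.
End LowerSums.

(** * The Bessel-Kingman kernel *)

Lemma Rdiv_nonneg u v : 0 <= u -> 0 < v -> 0 <= u / v.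
Proof. intros. unfold Rdiv. apply Rmult_le_pos; [auto|left; apply Rinv_0_lt_compat; auto]. Qed.

Lemma exp_le_compat x y : x <= y -> exp x <= exp y.
Proof. intros [H|H]; [left; apply exp_increasing; auto|subst; lra]. Qed.

Lemma ln_le_compat x y : 0 < x -> x <= y -> ln x <= ln y.
Proof. intros H [H1|H1]; [left; apply ln_increasing; auto|subst; lra]. Qed.

Lemma Rpower_pos b e : 0 < Rpower b e.
Proof. apply exp_pos. Qed.

Lemma rpow_pos_base b e : 0 < b -> rpow b e = Rpower b e.
Proof. intro H. unfold rpow. destruct Rlt_dec; [auto|lra]. Qed.

Lemma rpow_nonneg b e : 0 <= rpow b e.
Proof.
  unfold rpow. destruct Rlt_dec; [left; apply Rpower_pos|]. destruct Req_EM_T; lra.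
Qed.

Lemma rpow_le_Rpower b e Q : 0 <= e -> 0 <= b -> b <= Q -> 0 < Q -> rpow b e <= Rpower Q e.
Proof.
  intros He Hb HbQ HQ. unfold rpow. destruct Rlt_dec; [apply Rle_Rpower_l; auto|].
  destruct Req_EM_T as [->|]; [rewrite Rpower_O; lra|left; apply Rpower_pos].
Qed.

(* The density of eps_x * eps_y with respect to Lebesgue measure dz. *)
Definition weighted_kernel (a x y z : R) : R := Kern a x y z * rpow z (2 * a + 1).

Lemma weighted_kernel_at_0 a x y : 1/2 <= a -> weighted_kernel a x y 0 = 0.
Proof.
  intro Ha. unfold weighted_kernel, Kern. unfold rpow at 3.
  destruct Rlt_dec; [lra|]. destruct Req_EM_T; [lra|]. ring.
Qed.

Lemma kernel_polynomial_bounds x y z : 0 < x -> 0 < y -> Rabs (x - y) <= z <= x + y ->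
  0 <= (z ^ 2 - (x - y) ^ 2) * ((x + y) ^ 2 - z ^ 2) /\
  (z ^ 2 - (x - y) ^ 2) * ((x + y) ^ 2 - z ^ 2) <= 4 * z ^ 2 * (x * y) /\
  (z ^ 2 - (x - y) ^ 2) * ((x + y) ^ 2 - z ^ 2) <= 16 * (x * y) ^ 2.
Proof.
  intros Hx Hy [H1 H2].
  assert (Hz : 0 <= z) by (pose proof (Rabs_pos (x - y)); lra).
  assert (A1 : (x - y) ^ 2 <= z ^ 2).
  { rewrite <- (pow2_abs (x - y)). pose proof (Rabs_pos (x - y)). simpl. nra. }
  assert (A2 : z ^ 2 <= (x + y) ^ 2) by nra.
  assert (B3 : z ^ 2 - (x - y) ^ 2 <= 4 * (x * y)) by nra.
  assert (B4 : (x + y) ^ 2 - z ^ 2 <= 4 * (x * y)) by nra.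
  split; [apply Rmult_le_pos; lra|split].
  - replace (4 * z ^ 2 * (x * y)) with (z ^ 2 * (4 * (x * y))) by ring.
    pose proof (pow2_ge_0 (x - y)). apply Rmult_le_compat; lra.
  - replace (16 * (x * y) ^ 2) with ((4 * (x * y)) * (4 * (x * y))) by ring.
    apply Rmult_le_compat; lra.
Qed.

Lemma weighted_kernel_le_exp a x y z Q : 1/2 <= a -> 0 < x -> 0 < y -> 0 < z ->
  Rabs (x - y) <= z <= x + y ->
  0 < Q -> (z ^ 2 - (x - y) ^ 2) * ((x + y) ^ 2 - z ^ 2) <= Q ->
  Rabs (weighted_kernel a x y z) <=
  Rabs (CGamma a) * exp ((a - 1/2) * ln Q + (2 * a + 1) * ln z - 2 * a * (ln x + ln y + ln z)).
Proof.
  intros Ha Hx Hy Hz Hr HQ HPQ.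
  destruct (kernel_polynomial_bounds x y z Hx Hy Hr) as [HP0 _].
  unfold weighted_kernel, Kern.
  rewrite (rpow_pos_base (x * y * z)) by (apply Rmult_lt_0_compat; [nra|lra]).
  rewrite (rpow_pos_base z) by lra.
  set (P := (z ^ 2 - (x - y) ^ 2) * ((x + y) ^ 2 - z ^ 2)) in *.
  assert (Hr1 := rpow_le_Rpower P (a - 1/2) Q ltac:(lra) HP0 HPQ HQ).
  assert (Hr0 := rpow_nonneg P (a - 1/2)).
  set (D := Rpower (x * y * z) (2 * a)).
  set (Z := Rpower z (2 * a + 1)).
  assert (HD : 0 < D) by apply Rpower_pos.
  assert (HZ : 0 < Z) by apply Rpower_pos.
  replace (CGamma a * rpow P (a - 1 / 2) / D * Z) with
    (CGamma a * (rpow P (a - 1 / 2) * (Z * / D))) by (field; lra).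
  rewrite Rabs_mult, (Rabs_pos_eq (rpow P _ * _)).
  2:{ apply Rmult_le_pos; [lra|]. apply Rmult_le_pos; [lra|left; apply Rinv_0_lt_compat; auto]. }
  apply Rmult_le_compat_l; [apply Rabs_pos|].
  replace ((a - 1/2) * ln Q + (2 * a + 1) * ln z - 2 * a * (ln x + ln y + ln z))
    with ((a - 1/2) * ln Q + ((2 * a + 1) * ln z + - (2 * a * (ln x + ln y + ln z)))) by ring.
  rewrite exp_plus, exp_plus, exp_Ropp.
  assert (ED : D = exp (2 * a * (ln x + ln y + ln z))).
  { unfold D, Rpower. rewrite !ln_mult by nra. reflexivity. }
  rewrite <- ED. unfold Z, Rpower in *.
  apply Rmult_le_compat_r; [|exact Hr1].
  apply Rmult_le_pos; [left; apply exp_pos|left; apply Rinv_0_lt_compat; auto].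
Qed.

Definition kernel_const_min (a : R) : R := Rabs (CGamma a) * 2 * Rpower 16 (a - 1/2).
Definition kernel_const_pow (a : R) : R := Rabs (CGamma a) * Rpower 4 (a - 1/2).

Lemma kernel_const_min_nonneg a : 0 <= kernel_const_min a.
Proof.
  unfold kernel_const_min. pose proof (Rpower_pos 16 (a - 1/2)).
  pose proof (Rabs_pos (CGamma a)). nra.
Qed.

Lemma kernel_const_pow_nonneg a : 0 <= kernel_const_pow a.
Proof.
  unfold kernel_const_pow. pose proof (Rpower_pos 4 (a - 1/2)).
  pose proof (Rabs_pos (CGamma a)). nra.
Qed.

(* Uses the bound 16 (x y)^2 on the polynomial factor and z <= 2 max(x, y). *)
Lemma weighted_kernel_le_inv_min a x y z : 1/2 <= a -> 0 < x -> 0 < y ->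
  Rabs (x - y) <= z <= x + y ->
  Rabs (weighted_kernel a x y z) <= kernel_const_min a / Rmin x y.
Proof.
  intros Ha Hx Hy Hr.
  assert (Hm : 0 < Rmin x y) by (apply Rmin_glb_lt; auto).
  destruct (Rle_lt_or_eq_dec 0 z) as [Hz|<-]; [pose proof (Rabs_pos (x - y)); lra| |].
  2:{ rewrite weighted_kernel_at_0, Rabs_R0 by auto.
      apply Rdiv_nonneg; [apply kernel_const_min_nonneg|auto]. }
  destruct (kernel_polynomial_bounds x y z Hx Hy Hr) as [_ [_ HP]].
  assert (Hxy : 0 < x * y) by (apply Rmult_lt_0_compat; auto).
  eapply Rle_trans; [apply (weighted_kernel_le_exp a x y z (16 * (x * y) ^ 2)); auto; nra|].
  unfold kernel_const_min.
  replace (Rabs (CGamma a) * 2 * Rpower 16 (a - 1/2) / Rmin x y) with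
    (Rabs (CGamma a) * exp (ln 2 + (a - 1/2) * ln 16 - ln (Rmin x y))).
  2:{ unfold Rminus. rewrite !exp_plus, exp_Ropp, !exp_ln by lra.
      unfold Rpower. field. lra. }
  apply Rmult_le_compat_l; [apply Rabs_pos|].
  replace ((x * y) ^ 2) with ((x * y) * (x * y)) by ring.
  rewrite !ln_mult by nra.
  apply exp_le_compat.
  assert (ln z <= ln 2 + ln (Rmax x y)).
  { rewrite <- ln_mult by (try lra; unfold Rmax; destruct Rle_dec; lra).
    apply ln_le_compat; auto. unfold Rmax; destruct Rle_dec; lra. }
  assert (ln x + ln y = ln (Rmin x y) + ln (Rmax x y)).
  { unfold Rmin, Rmax; destruct Rle_dec; lra. }
  nra.
Qed.

(* Uses the bound 4 z^2 x y on the polynomial factor. *)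
Lemma weighted_kernel_le_pow a x y z : 1/2 <= a -> 0 < x -> 0 < y ->
  Rabs (x - y) <= z <= x + y ->
  Rabs (weighted_kernel a x y z) <=
  kernel_const_pow a * Rpower z (2 * a) / Rpower (x * y) (a + 1/2).
Proof.
  intros Ha Hx Hy Hr.
  destruct (Rle_lt_or_eq_dec 0 z) as [Hz|<-]; [pose proof (Rabs_pos (x - y)); lra| |].
  2:{ rewrite weighted_kernel_at_0, Rabs_R0 by auto. apply Rdiv_nonneg; [|apply Rpower_pos].
      apply Rmult_le_pos; [apply kernel_const_pow_nonneg|left; apply Rpower_pos]. }
  destruct (kernel_polynomial_bounds x y z Hx Hy Hr) as [_ [HP _]].
  assert (Hxy : 0 < x * y) by (apply Rmult_lt_0_compat; auto).
  eapply Rle_trans;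
    [apply (weighted_kernel_le_exp a x y z (4 * z ^ 2 * (x * y))); auto;
     apply Rmult_lt_0_compat; auto; simpl; nra|].
  unfold kernel_const_pow.
  replace (Rabs (CGamma a) * Rpower 4 (a - 1/2) * Rpower z (2 * a) / Rpower (x * y) (a + 1/2))
    with (Rabs (CGamma a) * exp ((a - 1/2) * ln 4 + 2 * a * ln z - (a + 1/2) * (ln x + ln y))).
  2:{ unfold Rminus. rewrite !exp_plus, exp_Ropp. unfold Rpower. rewrite ln_mult by lra.
      field. apply Rgt_not_eq, exp_pos. }
  apply Rmult_le_compat_l; [apply Rabs_pos|].
  rewrite (ln_mult (4 * z ^ 2)), (ln_mult 4) by nra.
  replace (z ^ 2) with (z * z) by ring. rewrite (ln_mult z z), (ln_mult x y) by lra.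
  apply Req_le. f_equal. field.
Qed.

(** * The weights omega *)

Section HalfIntegerPower.
Variable a : R.
Hypothesis Ha : 1/2 <= a.

(* omega a n is comparable to pw (n + 1) ^ 2 = (n + 1) ^ (2 a + 1). *)
Definition pw (u : R) : R := Rpower u (a + 1/2).

Lemma pw_pos u : 0 < pw u.
Proof. apply Rpower_pos. Qed.

Lemma pw_mul u v : 0 < u -> 0 < v -> pw (u * v) = pw u * pw v.
Proof. intros. unfold pw. rewrite Rpower_mult_distr; auto. Qed.

Lemma pw_le u v : 0 < u -> u <= v -> pw u <= pw v.
Proof. intros. unfold pw. apply Rle_Rpower_l; [lra|split; auto]. Qed.

Lemma pw_1 : pw 1 = 1.
Proof. unfold pw, Rpower. rewrite ln_1, Rmult_0_r. apply exp_0. Qed.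

Lemma Rpower_2a1_pw u : Rpower u (2 * a + 1) = pw u * pw u.
Proof. unfold pw. rewrite <- Rpower_plus. f_equal. lra. Qed.

Lemma Rpower_2a_pw u : 0 < u -> Rpower u (2 * a) = pw u * pw u / u.
Proof.
  intro Hu. rewrite <- Rpower_2a1_pw, Rpower_plus, Rpower_1 by auto. field. lra.
Qed.

Lemma pw_sq_ge u : 1 <= u -> u <= pw u * pw u.
Proof.
  intro Hu. rewrite <- Rpower_2a1_pw, Rpower_plus, Rpower_1 by lra.
  assert (1 <= Rpower u (2 * a)); [|nra].
  unfold Rpower. rewrite <- exp_0. apply exp_le_compat.
  assert (0 <= ln u) by (rewrite <- ln_1; apply ln_le_compat; lra). nra.
Qed.

Lemma omega_ge n : pw (INR n + 1) * pw (INR n + 1) / (2 * a + 2) <= omega a n.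
Proof.
  unfold omega, Rdiv. apply Rmult_le_compat_r; [left; apply Rinv_0_lt_compat; lra|].
  pose proof (pos_INR n) as Hn.
  rewrite (rpow_pos_base (INR n + 1)) by lra.
  replace (2 * a + 2) with ((2 * a + 1) + 1) by ring.
  rewrite Rpower_plus, Rpower_1, Rpower_2a1_pw by lra.
  destruct n as [|n].
  - simpl. unfold rpow. destruct Rlt_dec; [lra|]. destruct Req_EM_T; [exfalso; lra|]. rewrite Rplus_0_l, Rmult_1_r. lra.
  - assert (H0 : 0 < INR (S n)) by (apply lt_0_INR; lia).
    rewrite rpow_pos_base, Rpower_plus, Rpower_1, Rpower_2a1_pw by lra.
    assert (pw (INR (S n)) <= pw (INR (S n) + 1)) by (apply pw_le; lra).
    pose proof (pw_pos (INR (S n))).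
    assert (pw (INR (S n)) * pw (INR (S n)) <= pw (INR (S n) + 1) * pw (INR (S n) + 1))
      by (apply Rmult_le_compat; lra).
    nra.
Qed.

(* Mean value theorem for t ^ (2 a + 2) on [n, n + 1]. *)
Lemma omega_le n : omega a n <= pw (INR n + 1) * pw (INR n + 1).
Proof.
  unfold omega. pose proof (pos_INR n) as Hn.
  rewrite (rpow_pos_base (INR n + 1)) by lra.
  destruct n as [|n].
  - simpl. unfold rpow at 1. destruct Rlt_dec; [lra|]. destruct Req_EM_T; [lra|].
    rewrite Rplus_0_l, pw_1. unfold Rpower. rewrite ln_1, Rmult_0_r, exp_0.
    apply Rmult_le_reg_r with (2 * a + 2); [lra|]. field_simplify; lra.
  - assert (H0 : 0 < INR (S n)) by (apply lt_0_INR; lia).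
    rewrite (rpow_pos_base (INR (S n))) by lra.
    destruct (MVT_cor2 (fun t => Rpower t (2 * a + 2))
               (fun t => (2 * a + 2) * Rpower t (2 * a + 2 - 1))
               (INR (S n)) (INR (S n) + 1)) as [c [Hc1 Hc2]]; [lra| |].
    + intros c Hc. apply derivable_pt_lim_power. lra.
    + cbv beta in Hc1. rewrite Hc1. replace (2 * a + 2 - 1) with (2 * a + 1) by ring.
      rewrite <- Rpower_2a1_pw.
      replace (INR (S n) + 1 - INR (S n)) with 1 by ring.
      assert (Rpower c (2 * a + 1) <= Rpower (INR (S n) + 1) (2 * a + 1))
        by (apply Rle_Rpower_l; lra).
      apply Rmult_le_reg_r with (2 * a + 2); [lra|].
      unfold Rdiv. rewrite Rmult_assoc, Rinv_l, Rmult_1_r by lra. nra.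
Qed.

Lemma omega_nonneg n : 0 <= omega a n.
Proof.
  eapply Rle_trans; [|apply omega_ge]. apply Rdiv_nonneg; [|lra].
  pose proof (pw_pos (INR n + 1)). nra.
Qed.

Lemma omega_le_pw_sq n u : INR n + 1 <= u -> omega a n <= pw u * pw u.
Proof.
  intro H. eapply Rle_trans; [apply omega_le|].
  pose proof (pos_INR n). pose proof (pw_pos (INR n + 1)).
  assert (pw (INR n + 1) <= pw u) by (apply pw_le; lra).
  apply Rmult_le_compat; lra.
Qed.

End HalfIntegerPower.

(** * The kernel matrix and its column sums *)

Section KernelMatrix.
Variables a y : R.
Hypothesis Ha : 1/2 <= a.
Hypothesis Hy : 0 < y.

Definition K1 : R := Rmax 1 (kernel_const_min a).
Definition K2 : R := kernel_const_pow a.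

Lemma K1_ge_1 : 1 <= K1.
Proof. apply Rmax_l. Qed.

Lemma K2_nonneg : 0 <= K2.
Proof. apply kernel_const_pow_nonneg. Qed.

(* Necessary condition for the cell [m, m + 1) to meet [|x - y|, x + y] with x in [n, n + 1). *)
Definition band (n m : nat) : Prop :=
  INR m < INR n + 1 + y /\ y - INR n - 1 < INR m + 1 /\ INR n - y < INR m + 1.

Definition beta_min (n : nat) : R := if Rle_dec y (INR n) then K1 / y else 2 * K1.
Definition beta_pow (n m : nat) : R :=
  match n with
  | O => 2 * K1
  | _ => K2 * (pw a (INR m + 1) * pw a (INR m + 1) / (INR m + 1)) / (pw a (INR n) * pw a y)
  end.
(* Bounds for kernel_cell_bound x m * cell_len with x in [n, n + 1): 2 K1 always, since
   [|x - y|, x + y] has length 2 min(x, y); K1 / y when y <= n; the power bound when n >= 1. *)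
Definition beta_bound (n m : nat) : R := Rmin (2 * K1) (Rmin (beta_min n) (beta_pow n m)).
Definition beta (n m : nat) : R :=
  if excluded_middle_informative (band n m) then beta_bound n m else 0.

Definition kernel_cell_bound (x : R) (m : nat) : R :=
  Rmin (K1 / Rmin x y) (K2 * Rpower (INR m + 1) (2 * a) / Rpower (x * y) (a + 1/2)).

Lemma kernel_cell_bound_nonneg x m : 0 < x -> 0 <= kernel_cell_bound x m.
Proof.
  intro Hx. pose proof K1_ge_1. pose proof K2_nonneg. apply Rmin_glb.
  - apply Rdiv_nonneg; [lra|]. apply Rmin_glb_lt; auto.
  - apply Rdiv_nonneg; [|apply Rpower_pos]. pose proof (Rpower_pos (INR m + 1) (2 * a)). nra.
Qed.

Lemma weighted_kernel_le_cell_bound x z m : 0 < x -> Rabs (x - y) <= z <= x + y ->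
  INR m <= z < INR m + 1 -> Rabs (weighted_kernel a x y z) <= kernel_cell_bound x m.
Proof.
  intros Hx Hr Hm.
  destruct (Req_dec z 0) as [->|Hz].
  { rewrite weighted_kernel_at_0, Rabs_R0 by auto. apply kernel_cell_bound_nonneg; auto. }
  apply Rmin_glb.
  - eapply Rle_trans; [apply weighted_kernel_le_inv_min; auto|].
    unfold Rdiv. apply Rmult_le_compat_r; [|apply Rmax_r].
    left; apply Rinv_0_lt_compat, Rmin_glb_lt; auto.
  - eapply Rle_trans; [apply weighted_kernel_le_pow; auto|].
    unfold Rdiv. apply Rmult_le_compat_r; [left; apply Rinv_0_lt_compat, Rpower_pos|].
    apply Rmult_le_compat_l; [apply K2_nonneg|].
    pose proof (Rabs_pos (x - y)). apply Rle_Rpower_l; lra.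
Qed.

Lemma beta_bound_nonneg n m : 0 <= beta_bound n m.
Proof.
  pose proof K1_ge_1. pose proof K2_nonneg.
  apply Rmin_glb; [lra|]. apply Rmin_glb.
  - unfold beta_min. destruct Rle_dec; [apply Rdiv_nonneg|]; lra.
  - unfold beta_pow. destruct n; [lra|]. apply Rdiv_nonneg.
    + apply Rmult_le_pos; auto. apply Rdiv_nonneg; [|pose proof (pos_INR m); lra].
      pose proof (pw_pos a (INR m + 1)). nra.
    + pose proof (pw_pos a (INR (S n))). pose proof (pw_pos a y). nra.
Qed.

Lemma beta_nonneg n m : 0 <= beta n m.
Proof. unfold beta. destruct excluded_middle_informative; [apply beta_bound_nonneg|lra]. Qed.

Lemma cell_len_off_band x n m : INR n <= x < INR n + 1 -> ~ band n m ->
  cell_len (Rabs (x - y)) (x + y) m = 0.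
Proof.
  intros Hxn Hb. unfold cell_len. apply Rmax_left.
  apply Rnot_lt_le. intro Hpos. apply Hb.
  assert (INR m < x + y) by (revert Hpos; unfold Rmin, Rmax; repeat destruct Rle_dec; lra).
  assert (Rabs (x - y) < INR m + 1) by (revert Hpos; unfold Rmin, Rmax; repeat destruct Rle_dec; lra).
  assert (y - x <= Rabs (x - y)) by (rewrite Rabs_minus_sym; apply Rle_abs).
  pose proof (Rle_abs (x - y)). unfold band. lra.
Qed.

Lemma kernel_cell_mass_le_bound x n m : INR n <= x < INR n + 1 -> 0 < x ->
  kernel_cell_bound x m * cell_len (Rabs (x - y)) (x + y) m <= beta_bound n m.
Proof.
  intros Hxn Hx.
  set (mu := Rmin x y). set (J := cell_len (Rabs (x - y)) (x + y) m).
  assert (Hmu : 0 < mu) by (apply Rmin_glb_lt; auto).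
  assert (J0 : 0 <= J) by apply cell_len_nonneg.
  assert (J1 : J <= 1) by (unfold J, cell_len, Rmax, Rmin; repeat destruct Rle_dec; lra).
  assert (J2 : J <= 2 * mu).
  { assert (x + y - Rabs (x - y) = 2 * mu).
    { unfold mu, Rmin, Rabs. destruct Rle_dec; destruct Rcase_abs; lra. }
    unfold J, cell_len. unfold Rmax, Rmin in *. repeat destruct Rle_dec; lra. }
  assert (W0 := kernel_cell_bound_nonneg x m Hx).
  assert (W1 : kernel_cell_bound x m <= K1 / mu) by apply Rmin_l.
  assert (W2 : kernel_cell_bound x m <=
               K2 * Rpower (INR m + 1) (2 * a) / Rpower (x * y) (a + 1/2)) by apply Rmin_r.
  apply Rmin_glb; [|apply Rmin_glb].
  - apply Rle_trans with (K1 / mu * (2 * mu)); [apply Rmult_le_compat; auto|].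
    right. field. lra.
  - unfold beta_min. destruct Rle_dec as [Hyn|Hyn].
    + replace mu with y in W1 by (unfold mu, Rmin; destruct Rle_dec; lra).
      apply Rle_trans with (K1 / y * 1); [apply Rmult_le_compat|]; lra.
    + apply Rle_trans with (K1 / mu * (2 * mu)); [apply Rmult_le_compat; auto|].
      right. field. lra.
  - unfold beta_pow. destruct n as [|n'].
    { apply Rle_trans with (K1 / mu * (2 * mu)); [apply Rmult_le_compat; auto|].
      right. field. lra. }
    assert (Hn : 0 < INR (S n')) by (apply lt_0_INR; lia).
    apply Rle_trans with (K2 * Rpower (INR m + 1) (2 * a) / Rpower (x * y) (a + 1/2) * 1);
      [apply Rmult_le_compat; auto|].
    rewrite Rmult_1_r, Rpower_2a_pw by (pose proof (pos_INR m); lra).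
    fold (pw a (x * y)). rewrite <- (pw_mul a (INR (S n'))) by lra.
    unfold Rdiv. apply Rmult_le_compat_l.
    + apply Rmult_le_pos; [apply K2_nonneg|]. apply Rdiv_nonneg; [|pose proof (pos_INR m); lra].
      pose proof (pw_pos a (INR m + 1)). nra.
    + apply Rinv_le_contravar; [apply pw_pos|].
      apply (pw_le a Ha); [apply Rmult_lt_0_compat; auto|]. apply Rmult_le_compat_r; lra.
Qed.

Lemma kernel_cell_mass_le_beta x n m : INR n <= x < INR n + 1 -> 0 < x ->
  kernel_cell_bound x m * cell_len (Rabs (x - y)) (x + y) m <= beta n m.
Proof.
  intros Hxn Hx. unfold beta. destruct excluded_middle_informative as [Hb|Hb].
  - apply kernel_cell_mass_le_bound; auto.
  - rewrite (cell_len_off_band x n m); auto. lra.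
Qed.

End KernelMatrix.

Section ColumnSums.
Variables a y : R.
Hypothesis Ha : 1/2 <= a.
Hypothesis Hy : 0 < y.

Lemma column_sum_le_count m A B v K : 0 <= v ->
  (forall n, band y n m -> omega a n * beta_bound a y n m <= v) ->
  (forall n, band y n m -> A <= INR n <= B) ->
  sum_f_R0 (fun n => omega a n * beta a y n m) K <= Rmax 0 (B - A + 1) * v.
Proof.
  intros Hv Hterm Hrange. apply sum_f_R0_le_count; auto.
  - intro n. pose proof (omega_nonneg a Ha n).
    split; [apply Rmult_le_pos; auto; apply beta_nonneg; auto|].
    unfold beta. destruct excluded_middle_informative; [auto|lra].
  - intros n Hn. apply Hrange. unfold beta in Hn.
    destruct excluded_middle_informative; [auto|]. exfalso; apply Hn; ring.
Qed.

Definition small_y_const : R := if Rle_dec y 1 then 2 * K1 a else K1 a / y.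

Lemma column_term_le_small_y n m : let r := INR m + 1 in y <= r / 4 -> band y n m ->
  omega a n * beta_bound a y n m <=
  (pw a 3 * pw a r) * (pw a 3 * pw a r) * small_y_const.
Proof.
  intros r Hyr [R1 [R2 R3]]. assert (Hm : INR m = r - 1) by (unfold r; ring).
  assert (Hr : 1 <= r) by (pose proof (pos_INR m); lra).
  apply Rmult_le_compat; [apply omega_nonneg; auto|apply beta_bound_nonneg; auto| |].
  - rewrite <- pw_mul by lra. apply omega_le_pw_sq; auto. lra.
  - unfold small_y_const. destruct Rle_dec; [apply Rmin_l|].
    eapply Rle_trans; [apply Rmin_r|]. eapply Rle_trans; [apply Rmin_l|].
    unfold beta_min. destruct Rle_dec; lra.
Qed.

Lemma column_sum_le_small_y m K : let r := INR m + 1 in y <= r / 4 ->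
  sum_f_R0 (fun n => omega a n * beta a y n m) K <=
  10 * K1 a * (pw a 3 * pw a 3) * (pw a r * pw a r).
Proof.
  intros r Hyr. assert (Hm : INR m = r - 1) by (unfold r; ring).
  assert (Hr : 1 <= r) by (pose proof (pos_INR m); lra).
  pose proof (K1_ge_1 a) as HK1.
  assert (HX : 0 <= pw a 3 * pw a 3 * (pw a r * pw a r)).
  { pose proof (pw_pos a 3). pose proof (pw_pos a r). apply Rmult_le_pos; nra. }
  assert (Hc : 0 <= small_y_const) by
    (unfold small_y_const; destruct Rle_dec; [lra|apply Rdiv_nonneg; lra]).
  eapply Rle_trans.
  - apply (column_sum_le_count m (r - 2 - y) (r + y)
             ((pw a 3 * pw a r) * (pw a 3 * pw a r) * small_y_const)).
    + pose proof (pw_pos a 3). pose proof (pw_pos a r).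
      apply Rmult_le_pos; [apply Rmult_le_pos; apply Rmult_le_pos; lra|exact Hc].
    + intros n Hn. apply column_term_le_small_y; auto.
    + intros n [R1 [R2 R3]]. lra.
  - clearbody r. replace (r + y - (r - 2 - y) + 1) with (2 * y + 3) by ring. rewrite Rmax_right by lra.
    replace (pw a 3 * pw a r * (pw a 3 * pw a r)) with (pw a 3 * pw a 3 * (pw a r * pw a r))
      by ring.
    assert (0 <= K1 a * (pw a 3 * pw a 3 * (pw a r * pw a r))) by nra.
    unfold small_y_const. destruct Rle_dec.
    + nra.
    + replace ((2 * y + 3) * (pw a 3 * pw a 3 * (pw a r * pw a r) * (K1 a / y))) with
        ((2 + 3 / y) * K1 a * (pw a 3 * pw a 3 * (pw a r * pw a r))) by (field; lra).
      assert (3 / y <= 3) by (apply Rmult_le_reg_r with y; [lra|]; field_simplify; lra).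
      assert (0 <= 3 / y) by (apply Rdiv_nonneg; lra).
      nra.
Qed.

Lemma beta_bound_le_pow n m : (n <> 0)%nat -> beta_bound a y n m <=
  K2 a * (pw a (INR m + 1) * pw a (INR m + 1) / (INR m + 1)) / (pw a (INR n) * pw a y).
Proof.
  intro Hn. eapply Rle_trans; [apply Rmin_r|]. eapply Rle_trans; [apply Rmin_r|].
  unfold beta_pow. destruct n; [lia|lra].
Qed.

(* For y >= 4 r the band forces n >= y / 2, so pw y <= pw 2 * pw n. *)
Lemma column_term_le_large_y n m : let r := INR m + 1 in 4 * r <= y -> band y n m ->
  omega a n * beta_bound a y n m <=
  K2 a * (pw a 2 * pw a 2 * pw a 2) * (pw a r * pw a r) / r.
Proof.
  intros r Hyr [R1 [R2 R3]]. assert (Hm : INR m = r - 1) by (unfold r; ring).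
  assert (Hr : 1 <= r) by (pose proof (pos_INR m); lra).
  assert (Hn0 : (n <> 0)%nat) by (intros ->; simpl in *; lra).
  assert (Hnp : 0 < INR n) by lra.
  set (P2 := pw a 2). set (Pr := pw a r). set (Pn := pw a (INR n)). set (Py := pw a y).
  assert (HP2 := pw_pos a 2). assert (HPr := pw_pos a r).
  assert (HPn := pw_pos a (INR n)). assert (HPy := pw_pos a y).
  fold P2 Pr Pn Py in HP2, HPr, HPn, HPy.
  pose proof (K2_nonneg a).
  assert (Hom : omega a n <= (P2 * Py) * (P2 * Py)).
  { unfold P2, Py. rewrite <- pw_mul by lra. apply omega_le_pw_sq; auto. lra. }
  assert (Hyn : Py <= P2 * Pn).
  { unfold P2, Pn, Py. rewrite <- pw_mul by lra. apply pw_le; auto; lra. }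
  eapply Rle_trans.
  { apply Rmult_le_compat; [apply omega_nonneg; auto|apply beta_bound_nonneg; auto|exact Hom|].
    apply beta_bound_le_pow; auto. }
  fold r Pr Pn Py.
  replace (P2 * Py * (P2 * Py) * (K2 a * (Pr * Pr / r) / (Pn * Py)))
    with ((K2 a * (P2 * P2) * (Pr * Pr) / r) * (Py / Pn)) by (field; repeat split; lra).
  replace (K2 a * (P2 * P2 * P2) * (Pr * Pr) / r)
    with ((K2 a * (P2 * P2) * (Pr * Pr) / r) * P2) by (field; lra).
  apply Rmult_le_compat_l.
  - apply Rdiv_nonneg; [|lra]. apply Rmult_le_pos; [apply Rmult_le_pos|]; nra.
  - apply Rmult_le_reg_r with Pn; auto. unfold Rdiv.
    rewrite Rmult_assoc, Rinv_l, Rmult_1_r by lra. lra.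
Qed.

Lemma column_sum_le_large_y m K : let r := INR m + 1 in 4 * r <= y ->
  sum_f_R0 (fun n => omega a n * beta a y n m) K <=
  4 * K2 a * (pw a 2 * pw a 2 * pw a 2) * (pw a r * pw a r).
Proof.
  intros r Hyr. assert (Hm : INR m = r - 1) by (unfold r; ring).
  assert (Hr : 1 <= r) by (pose proof (pos_INR m); lra).
  set (X := K2 a * (pw a 2 * pw a 2 * pw a 2) * (pw a r * pw a r)).
  assert (HX : 0 <= X).
  { pose proof (K2_nonneg a). pose proof (pw_pos a 2). pose proof (pw_pos a r).
    unfold X. apply Rmult_le_pos; [apply Rmult_le_pos|]; [lra| |]; repeat apply Rmult_le_pos; lra. }
  eapply Rle_trans.
  - apply (column_sum_le_count m (y - r - 1) (r + y) (X / r)).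
    + apply Rdiv_nonneg; lra.
    + intros n Hn. apply column_term_le_large_y; auto.
    + intros n [R1 [R2 R3]]. lra.
  - clearbody r. replace (r + y - (y - r - 1) + 1) with (2 * r + 2) by ring. rewrite Rmax_right by lra.
    replace ((2 * r + 2) * (X / r)) with ((2 + 2 / r) * X) by (field; lra).
    assert (2 / r <= 2) by (apply Rmult_le_reg_r with r; [lra|]; field_simplify; lra).
    assert (0 <= 2 / r) by (apply Rdiv_nonneg; lra).
    unfold X in *. nra.
Qed.

Lemma column_term_at_0_le m : omega a 0 * beta_bound a y 0 m <= 2 * K1 a.
Proof.
  apply Rle_trans with (1 * (2 * K1 a)); [|lra].
  apply Rmult_le_compat; [apply omega_nonneg; auto|apply beta_bound_nonneg; auto| |apply Rmin_l].
  replace 1 with (pw a 1 * pw a 1) by (rewrite pw_1; ring).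
  apply omega_le_pw_sq; auto. simpl; lra.
Qed.

(* For r / 4 <= y <= 4 r all of pw n, pw r, pw y are comparable up to the factors pw 4, pw 5. *)
Lemma column_term_le_comparable_y n m : let r := INR m + 1 in r / 4 <= y -> y <= 4 * r ->
  band y n m ->
  omega a n * beta_bound a y n m <=
  2 * K1 a + K2 a * (pw a 2 * pw a 2 * pw a 4 * pw a 5) * (pw a r * pw a r) / r.
Proof.
  intros r Hyr1 Hyr2 [R1 [R2 R3]]. assert (Hm : INR m = r - 1) by (unfold r; ring).
  assert (Hr : 1 <= r) by (pose proof (pos_INR m); lra).
  set (P2 := pw a 2). set (P4 := pw a 4). set (P5 := pw a 5). set (Pr := pw a r).
  assert (HP2 := pw_pos a 2). assert (HP4 := pw_pos a 4). assert (HP5 := pw_pos a 5).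
  assert (HPr := pw_pos a r). fold P2 P4 P5 Pr in HP2, HP4, HP5, HPr.
  pose proof (K2_nonneg a). pose proof (K1_ge_1 a).
  assert (HD : 0 <= K2 a * (P2 * P2 * P4 * P5) * (Pr * Pr) / r).
  { apply Rdiv_nonneg; [|lra]. apply Rmult_le_pos; [apply Rmult_le_pos|]; [lra| |];
    repeat apply Rmult_le_pos; lra. }
  destruct (Nat.eq_dec n 0) as [->|Hn0]; [pose proof (column_term_at_0_le m); lra|].
  assert (Hn1 : 1 <= INR n) by (apply (le_INR 1); lia).
  set (Pn := pw a (INR n)). set (Py := pw a y).
  assert (HPn := pw_pos a (INR n)). assert (HPy := pw_pos a y). fold Pn Py in HPn, HPy.
  assert (Hom : omega a n <= (P2 * Pn) * (P2 * Pn)).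
  { unfold P2, Pn. rewrite <- pw_mul by lra. apply omega_le_pw_sq; auto. lra. }
  assert (Hry : Pr <= P4 * Py).
  { unfold P4, Py, Pr. rewrite <- pw_mul by lra. apply pw_le; auto; lra. }
  assert (Hnr : Pn <= P5 * Pr).
  { unfold P5, Pn, Pr. rewrite <- pw_mul by lra. apply pw_le; auto; lra. }
  eapply Rle_trans.
  { apply Rmult_le_compat; [apply omega_nonneg; auto|apply beta_bound_nonneg; auto|exact Hom|].
    apply beta_bound_le_pow; auto. }
  fold r Pr Pn Py.
  replace (P2 * Pn * (P2 * Pn) * (K2 a * (Pr * Pr / r) / (Pn * Py)))
    with ((K2 a * (P2 * P2) * Pr / r) * (Pn * (Pr / Py))) by (field; repeat split; lra).
  apply Rle_trans with ((K2 a * (P2 * P2) * Pr / r) * ((P5 * Pr) * P4)).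
  - apply Rmult_le_compat_l.
    + apply Rdiv_nonneg; [|lra]. apply Rmult_le_pos; [apply Rmult_le_pos|]; nra.
    + apply Rmult_le_compat; [lra|apply Rdiv_nonneg; lra|lra|].
      apply Rmult_le_reg_r with Py; auto. unfold Rdiv.
      rewrite Rmult_assoc, Rinv_l, Rmult_1_r by lra. lra.
  - replace (K2 a * (P2 * P2) * Pr / r * (P5 * Pr * P4))
      with (K2 a * (P2 * P2 * P4 * P5) * (Pr * Pr) / r) by (field; lra). lra.
Qed.

Lemma column_sum_le_comparable_y m K : let r := INR m + 1 in r / 4 <= y -> y <= 4 * r ->
  sum_f_R0 (fun n => omega a n * beta a y n m) K <=
  (12 * K1 a + 6 * K2 a * (pw a 2 * pw a 2 * pw a 4 * pw a 5)) * (pw a r * pw a r).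
Proof.
  intros r Hyr1 Hyr2. assert (Hm : INR m = r - 1) by (unfold r; ring).
  assert (Hr : 1 <= r) by (pose proof (pos_INR m); lra).
  set (D := K2 a * (pw a 2 * pw a 2 * pw a 4 * pw a 5)). set (Pr := pw a r).
  assert (HD : 0 <= D).
  { pose proof (K2_nonneg a). pose proof (pw_pos a 2). pose proof (pw_pos a 4).
    pose proof (pw_pos a 5). unfold D. apply Rmult_le_pos; [lra|]; repeat apply Rmult_le_pos; lra. }
  assert (HPr := pw_pos a r). fold Pr in HPr. pose proof (K1_ge_1 a).
  assert (Hrp : r <= Pr * Pr) by (apply pw_sq_ge; auto).
  assert (HDr : 0 <= D * (Pr * Pr) / r) by (apply Rdiv_nonneg; [apply Rmult_le_pos; nra|lra]).
  eapply Rle_trans.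
  - apply (column_sum_le_count m 0 (5 * r) (2 * K1 a + D * (Pr * Pr) / r)); [lra| |].
    + intros n Hn. apply column_term_le_comparable_y; auto.
    + intros n [R1 [R2 R3]]. pose proof (pos_INR n). lra.
  - clearbody r. replace (5 * r - 0 + 1) with (5 * r + 1) by ring. rewrite Rmax_right by lra.
    replace ((5 * r + 1) * (2 * K1 a + D * (Pr * Pr) / r)) with
      ((5 * r + 1) * 2 * K1 a + (5 + 1 / r) * (D * (Pr * Pr))) by (field; lra).
    assert (1 / r <= 1) by (apply Rmult_le_reg_r with r; [lra|]; field_simplify; lra).
    assert (0 <= 1 / r) by (apply Rdiv_nonneg; lra).
    assert (0 <= D * (Pr * Pr)) by (apply Rmult_le_pos; nra).
    assert (K1 a * r <= K1 a * (Pr * Pr)) by (apply Rmult_le_compat_l; lra).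
    assert (K1 a * 1 <= K1 a * r) by (apply Rmult_le_compat_l; lra).
    assert ((5 * r + 1) * 2 * K1 a <= 12 * K1 a * (Pr * Pr)) by lra.
    assert ((5 + 1 / r) * (D * (Pr * Pr)) <= 6 * (D * (Pr * Pr)))
      by (apply Rmult_le_compat_r; lra).
    unfold D in *. lra.
Qed.

Definition column_const : R :=
  10 * K1 a * (pw a 3 * pw a 3) + 4 * K2 a * (pw a 2 * pw a 2 * pw a 2) + 12 * K1 a
  + 6 * K2 a * (pw a 2 * pw a 2 * pw a 4 * pw a 5).

Lemma column_const_nonneg : 0 <= column_const.
Proof.
  pose proof (K1_ge_1 a). pose proof (K2_nonneg a).
  pose proof (pw_pos a 2). pose proof (pw_pos a 3). pose proof (pw_pos a 4). pose proof (pw_pos a 5).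
  assert (0 <= K1 a * (pw a 3 * pw a 3)) by (apply Rmult_le_pos; nra).
  assert (0 <= K2 a * (pw a 2 * pw a 2 * pw a 2)) by (apply Rmult_le_pos; [lra|]; repeat apply Rmult_le_pos; lra).
  assert (0 <= K2 a * (pw a 2 * pw a 2 * pw a 4 * pw a 5))
    by (apply Rmult_le_pos; [lra|]; repeat apply Rmult_le_pos; lra).
  unfold column_const. lra.
Qed.

Lemma column_sum_le m K : sum_f_R0 (fun n => omega a n * beta a y n m) K <=
  column_const * (pw a (INR m + 1) * pw a (INR m + 1)).
Proof.
  set (r := INR m + 1). pose proof (K1_ge_1 a). pose proof (K2_nonneg a).
  assert (HPr := pw_pos a r). assert (XR : 0 <= pw a r * pw a r) by nra.
  assert (H3 : 0 <= K1 a * (pw a 3 * pw a 3) * (pw a r * pw a r)).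
  { pose proof (pw_pos a 3). apply Rmult_le_pos; [apply Rmult_le_pos; nra|lra]. }
  assert (H2 : 0 <= K2 a * (pw a 2 * pw a 2 * pw a 2) * (pw a r * pw a r)).
  { pose proof (pw_pos a 2). apply Rmult_le_pos; [|lra].
    apply Rmult_le_pos; [lra|]; repeat apply Rmult_le_pos; lra. }
  assert (H4 : 0 <= K2 a * (pw a 2 * pw a 2 * pw a 4 * pw a 5) * (pw a r * pw a r)).
  { pose proof (pw_pos a 2). pose proof (pw_pos a 4). pose proof (pw_pos a 5).
    apply Rmult_le_pos; [|lra]. apply Rmult_le_pos; [lra|]; repeat apply Rmult_le_pos; lra. }
  assert (H1 : 0 <= K1 a * (pw a r * pw a r)) by nra.
  unfold column_const.
  destruct (Rle_dec y (r / 4)) as [Y1|Y1].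
  { pose proof (column_sum_le_small_y m K Y1) as HS. fold r in HS. clearbody r. lra. }
  destruct (Rle_dec (4 * r) y) as [Y2|Y2].
  { pose proof (column_sum_le_large_y m K Y2) as HS. fold r in HS. clearbody r. lra. }
  assert (Y1' : r / 4 <= y) by lra. assert (Y2' : y <= 4 * r) by lra.
  pose proof (column_sum_le_comparable_y m K Y1' Y2') as HS. fold r in HS. clearbody r. lra.
Qed.

Lemma column_sum_le_omega m K : sum_f_R0 (fun n => omega a n * beta a y n m) K <=
  column_const * (2 * a + 2) * omega a m.
Proof.
  eapply Rle_trans; [apply column_sum_le|]. rewrite Rmult_assoc.
  apply Rmult_le_compat_l; [apply column_const_nonneg|].
  pose proof (omega_ge a Ha m).
  apply Rmult_le_reg_r with (/ (2 * a + 2)); [apply Rinv_0_lt_compat; lra|].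
  replace ((2 * a + 2) * omega a m * / (2 * a + 2)) with (omega a m) by (field; lra).
  exact H.
Qed.
End ColumnSums.

(** * Norms of translates *)

Definition cell_abs (g : R -> R) (n : nat) (v : R) : Prop :=
  exists x, INR n <= x < INR n + 1 /\ v = Rabs (g x).

Lemma cell_abs_lub_nonneg g n l : is_lub (cell_abs g n) l -> 0 <= l.
Proof.
  intros [Hub _]. apply Rle_trans with (Rabs (g (INR n))); [apply Rabs_pos|].
  apply Hub. exists (INR n). split; [lra|reflexivity].
Qed.

Lemma cell_abs_lub_ge g n l z : is_lub (cell_abs g n) l -> INR n <= z < INR n + 1 ->
  Rabs (g z) <= l.
Proof. intros [Hub _] Hz. apply Hub. exists z; auto. Qed.

Lemma is_norm_le_of_cell_bound a g (T : nat -> R) M : 1/2 <= a ->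
  (forall n x, INR n <= x < INR n + 1 -> Rabs (g x) <= T n) ->
  (forall K, sum_f_R0 (fun n => omega a n * T n) K <= M) ->
  exists N', is_norm a g N' /\ N' <= M.
Proof.
  intros Ha HT HM.
  assert (Hlub : forall n, {l | is_lub (cell_abs g n) l}).
  { intro n. apply completeness.
    - exists (T n). intros v [x [Hx ->]]. apply HT; auto.
    - exists (Rabs (g (INR n))), (INR n). split; [lra|reflexivity]. }
  set (s := fun n => proj1_sig (Hlub n)).
  assert (Hs : forall n, is_lub (cell_abs g n) (s n)) by (intro n; apply (proj2_sig (Hlub n))).
  assert (Hs0 : forall n, 0 <= s n) by (intro n; apply (cell_abs_lub_nonneg g n), Hs).
  assert (HsT : forall n, s n <= T n).
  { intro n. apply (proj2 (Hs n)). intros v [x [Hx ->]]. apply HT; auto. }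
  set (partial := sum_f_R0 (fun n => omega a n * s n)).
  assert (HS : forall K, partial K <= M).
  { intro K. eapply Rle_trans; [|apply HM]. apply sum_Rle. intros n _.
    apply Rmult_le_compat_l; [apply omega_nonneg; auto|apply HsT]. }
  assert (Hgr : Un_growing partial).
  { intro k. unfold partial. simpl. pose proof (omega_nonneg a Ha (S k)). pose proof (Hs0 (S k)).
    nra. }
  assert (Hub : has_ub partial) by (exists M; intros v [K ->]; apply HS).
  destruct (growing_cv partial Hgr Hub) as [N' HN'].
  exists N'. split; [exists s; split; auto|].
  apply Rle_plus_epsilon. intros eps He. destruct (HN' eps He) as [K HK].
  specialize (HK K (le_n _)). specialize (HS K). unfold Rdist in HK.
  apply Rabs_def2 in HK. lra.
Qed.

Lemma tau_0 a f : tau a 0 f = f.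
Proof.
  apply functional_extensionality. intro x. unfold tau. destruct Req_EM_T; [reflexivity|lra].
Qed.

Section Translation.
Variables (a y : R) (f : R -> R) (s : nat -> R) (m0 : nat).
Hypothesis Ha : 1/2 <= a.
Hypothesis Hy : 0 < y.
Hypothesis Hm0 : INR m0 <= y < INR m0 + 1.
Hypothesis Hs0 : forall m, 0 <= s m.
Hypothesis Hsf : forall m z, INR m <= z < INR m + 1 -> Rabs (f z) <= s m.

Lemma beta_at_origin_ge_1 : 1 <= beta a y 0 m0.
Proof.
  unfold beta. destruct excluded_middle_informative as [_|Hb].
  - unfold beta_bound, beta_min, beta_pow. simpl INR.
    destruct Rle_dec; [exfalso; lra|]. pose proof (K1_ge_1 a).
    unfold Rmin; repeat destruct Rle_dec; lra.
  - exfalso. apply Hb. unfold band. simpl INR. lra.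
Qed.

Definition translate_cell_bound (n : nat) : R :=
  sum_f_R0 (fun m => s m * beta a y n m) (n + m0 + 1).

(* At x = 0 the translate is f y; for x > 0 bound the integrand by the kernel cell bounds. *)
Lemma tau_le_translate_cell_bound n x : INR n <= x < INR n + 1 ->
  Rabs (tau a y f x) <= translate_cell_bound n.
Proof.
  intros Hx. pose proof (pos_INR n) as Hn0.
  assert (Hsb : forall n m, 0 <= s m * beta a y n m).
  { intros. apply Rmult_le_pos; [apply Hs0|apply beta_nonneg; auto]. }
  unfold tau. destruct (Req_EM_T y 0) as [E|_]; [lra|].
  destruct (Req_EM_T x 0) as [->|Ex].
  - assert (n = 0%nat) by (destruct n; [reflexivity|pose proof (lt_0_INR (S n) ltac:(lia)); lra]).
    subst n. apply Rle_trans with (s m0 * beta a y 0 m0).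
    + pose proof (Hsf m0 y Hm0). pose proof (Hs0 m0). pose proof beta_at_origin_ge_1. nra.
    + apply (sum_f_R0_ge_term (fun m => s m * beta a y 0 m)); auto. lia.
  - assert (Hxp : 0 < x) by lra.
    eapply Rle_trans.
    + apply (Lint_abs_le _ _ _ (n + m0 + 1) (fun m => s m * kernel_cell_bound a y x m)).
      * apply Rabs_pos.
      * rewrite !plus_INR. simpl. lra.
      * intro m. apply Rmult_le_pos; [apply Hs0|apply kernel_cell_bound_nonneg; auto].
      * intros m z Hz Hm.
        replace (Kern a x y z * f z * rpow z (2 * a + 1)) with (weighted_kernel a x y z * f z)
          by (unfold weighted_kernel; ring).
        rewrite Rabs_mult, Rmult_comm.
        apply Rmult_le_compat; try apply Rabs_pos; auto.
        apply weighted_kernel_le_cell_bound; auto.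
      * unfold Rabs; destruct Rcase_abs; lra.
    + apply sum_Rle. intros m _. rewrite Rmult_assoc.
      apply Rmult_le_compat_l; [apply Hs0|]. apply kernel_cell_mass_le_beta; auto.
Qed.

(* Schur's test: exchange the order of summation and use the column sums of beta. *)
Lemma weighted_translate_cell_bound_sum_le N K :
  infinite_sum (fun n => omega a n * s n) N ->
  sum_f_R0 (fun n => omega a n * translate_cell_bound n) K <= column_const a * (2 * a + 2) * N.
Proof.
  intros HN. pose proof (omega_nonneg a Ha) as Hom.
  set (C := column_const a * (2 * a + 2)).
  assert (HC : 0 <= C) by (apply Rmult_le_pos; [apply column_const_nonneg|lra]).
  apply Rle_trans with
    (sum_f_R0 (fun n => sum_f_R0 (fun m => omega a n * (s m * beta a y n m)) (K + m0 + 1)) K).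
  { apply sum_Rle. intros n Hn. unfold translate_cell_bound. rewrite sum_f_R0_mult_l.
    apply (sum_f_R0_le_extend (fun m => omega a n * (s m * beta a y n m))); [|lia].
    intro k. apply Rmult_le_pos; [auto|]. apply Rmult_le_pos; [auto|apply beta_nonneg; auto]. }
  rewrite sum_f_R0_swap.
  apply Rle_trans with (sum_f_R0 (fun m => C * (omega a m * s m)) (K + m0 + 1)).
  - apply sum_Rle. intros m _.
    replace (sum_f_R0 (fun i => omega a i * (s m * beta a y i m)) K) with
      (s m * sum_f_R0 (fun i => omega a i * beta a y i m) K)
      by (rewrite sum_f_R0_mult_l; apply sum_eq; intros; ring).
    replace (C * (omega a m * s m)) with (s m * (C * omega a m)) by ring.
    apply Rmult_le_compat_l; [auto|]. apply column_sum_le_omega; auto.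
  - rewrite <- sum_f_R0_mult_l. apply Rmult_le_compat_l; [auto|].
    apply partial_sum_le_infinite_sum; auto. intro k; apply Rmult_le_pos; auto.
Qed.
End Translation.

Theorem mainTheorem5 (a : R) (Ha : 1/2 <= a) :
  exists C : R, 0 < C /\
    forall (f : R -> R) (N : R),
      meas_fun_Rplus f -> is_norm a f N ->
      forall y : R, 0 <= y ->
        exists N', is_norm a (tau a y f) N' /\ N' <= C * N.
Proof.
  set (C := column_const a * (2 * a + 2)).
  assert (HC : 0 <= C) by (apply Rmult_le_pos; [apply column_const_nonneg|lra]).
  exists (C + 1). split; [lra|].
  intros f N _ [s [Hs HN]] y Hy0.
  assert (Hs0 : forall m, 0 <= s m) by (intro m; apply (cell_abs_lub_nonneg f m), Hs).
  assert (HN0 : 0 <= N).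
  { apply (infinite_sum_nonneg _ _ HN). intro k. apply Rmult_le_pos; [apply omega_nonneg|]; auto. }
  assert (HCN : C * N <= (C + 1) * N) by nra.
  destruct (Req_dec y 0) as [->|Hy].
  { rewrite tau_0. exists N. split; [exists s; auto|nra]. }
  destruct (floor_nat y Hy0) as [m0 Hm0].
  destruct (is_norm_le_of_cell_bound a (tau a y f) (translate_cell_bound a y s m0) (C * N) Ha)
    as [N' [HN' HN'le]].
  - intros n x Hx. apply (tau_le_translate_cell_bound a y f s m0); auto; [lra|].
    intros m z Hz. exact (cell_abs_lub_ge f m (s m) z (Hs m) Hz).
  - intro K. apply weighted_translate_cell_bound_sum_le; auto; lra.
  - exists N'. split; [exact HN'|lra].
Qed.
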